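(* For each $n\in\mathbb N$ let $X_n=\{x_1^n,x_2^n\}$ be a two-point set with metric $d_n(x_1^n,x_2^n)=n$, and put $\alpha_n=\tfrac12$ if $n$ is even, $\alpha_n=\tfrac13$ if $n$ is odd. Define $M_n(x_i^n,x_j^n,0)=0$ and, for $t>0$, $M_n(x_i^n,x_j^n,t)=\alpha_n$ if $t\le d_n(x_i^n,x_j^n)$ and $M_n(x_i^n,x_j^n,t)=1$ if $t>d_n(x_i^n,x_j^n)$. Then each $(X_n,M_n,\cdot)$ (product $t$-norm) is a compact non-Archimedean fuzzy metric space, and the sequence $\{(X_n,M_n,\cdot)\}_n$ satisfies: (1) the constant function $C(s)=\tfrac13$ satisfies $0<C(s)\le\mathrm{diam}_s(X_n)$ for all $s>0$, $n\in\mathbb N$; (2) $\mathrm{Cov}(X_n,\varepsilon,t)\le 2$ for all $t>0$, $0<\varepsilon<1$, $n$; (3) for $t=\tfrac12$ and any $n,m$ with $n=2m$ and any $s$ with $m<s<n$, one has $M_n(x_1^n,x_2^n,s)<M_m(x_1^m,x_2^m,s)$ but $\dfrac{M_n(x_1^n,x_2^n,s)}{M_m(x_1^m,x_2^m,s)}<\dfrac{M_n(x_1^n,x_2^n,t)}{M_m(x_1^m,x_2^m,t)}$; and (4) $\{(X_n,M_n,\cdot)\}_n$ has no subsequence that is Cauchy with respect to $M_{GH}$.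
   Context: A fuzzy metric space $(X,M,\cdot)$ with the product $t$-norm: $M:X\times X\times[0,\infty)\to[0,1]$ with, for all $x,y,z$ and $t,s>0$: (KM1) $M(x,y,0)=0$; (KM2) $M(x,y,t)=1$ for all $t>0$ iff $x=y$; (KM3) symmetry; (KM4) $M(x,y,t)\cdot M(y,z,s)\le M(x,z,t+s)$; (KM5) $M(x,y,\cdot)$ left continuous on $[0,\infty)$. Non-Archimedean: $M(x,z,\max\{t,s\})\ge M(x,y,t)\cdot M(y,z,s)$. Balls $B(x,\varepsilon,t)=\{y: M(x,y,t)>1-\varepsilon\}$ generate the topology. $H_M(A,B,t)=\min\{\inf_{a\in A}\sup_{b\in B}M(a,b,t),\ \inf_{b\in B}\sup_{a\in A}M(a,b,t)\}$. A fuzzy metric on $X\sqcup Y$ is admissible if it restricts to the given ones on $X$ and $Y$; $M_{GH}(X,Y,t)=\sup\{H_M(X,Y,t): M$ admissible non-Archimedean fuzzy metric on $X\sqcup Y$ with the product $t$-norm$\}$. A sequence $(X_n)$ is Cauchy w.r.t. $M_{GH}$ if for every $t>0$, $0<\varepsilon<1$ there is $n_0$ with $M_{GH}(X_n,X_m,t)>1-\varepsilon$ for all $n,m\ge n_0$. $\mathrm{Cov}(X,\varepsilon,t)$ is the minimal cardinality of $C\subseteq X$ with $X=\bigcup_{c\in C}B(c,\varepsilon,t)$; $\mathrm{diam}_s(X)=\inf\{M(x,y,s):x,y\in X\}$. *)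

From Stdlib Require Import Reals Lra List Bool.
From Coquelicot Require Import Coquelicot.
Open Scope R_scope.

(** sup / inf of a set of values in [0,1] (conventions: sup of empty = 0, inf of empty = 1) *)
Definition Sup01 (E : R -> Prop) : R :=
  match Lub_Rbar E with Finite r => r | p_infty => 1 | m_infty => 0 end.
Definition Inf01 (E : R -> Prop) : R :=
  match Glb_Rbar E with Finite r => r | p_infty => 1 | m_infty => 0 end.

(** Fuzzy metric (Kramosil–Michálek) with the product t-norm; M x y t is only
    meaningful for t >= 0. *)
Definition is_fuzzy_metric {X : Type} (M : X -> X -> R -> R) : Prop :=
  (forall x y t, 0 <= t -> 0 <= M x y t <= 1) /\
  (forall x y, M x y 0 = 0) /\
  (forall x y, (forall t, 0 < t -> M x y t = 1) <-> x = y) /\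
  (forall x y t, 0 <= t -> M x y t = M y x t) /\
  (forall x y z t s, 0 < t -> 0 < s -> M x y t * M y z s <= M x z (t + s)) /\
  (forall x y t, 0 < t -> forall eps, 0 < eps ->
      exists delta, 0 < delta /\
        forall u, 0 <= u -> t - delta < u -> u <= t -> Rabs (M x y u - M x y t) < eps).

Definition non_archimedean {X : Type} (M : X -> X -> R -> R) : Prop :=
  forall x y z t s, 0 < t -> 0 < s -> M x y t * M y z s <= M x z (Rmax t s).

Definition fball {X : Type} (M : X -> X -> R -> R) (x : X) (eps t : R) : X -> Prop :=
  fun y => M x y t > 1 - eps.

Definition fopen {X : Type} (M : X -> X -> R -> R) (U : X -> Prop) : Prop :=
  forall x, U x -> exists eps t, 0 < eps < 1 /\ 0 < t /\
     forall y, fball M x eps t y -> U y.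

Definition fuzzy_compact {X : Type} (M : X -> X -> R -> R) : Prop :=
  forall (I : Type) (U : I -> X -> Prop),
    (forall i, fopen M (U i)) -> (forall x, exists i, U i x) ->
    exists l : list I, forall x, exists i, In i l /\ U i x.

(** Covering number Cov(X, eps, t) (an extended real; p_infty if no finite cover) *)
Definition Cov {X : Type} (M : X -> X -> R -> R) (eps t : R) : Rbar :=
  Glb_Rbar (fun r => exists C : list X, NoDup C /\
     (forall y, exists c, In c C /\ fball M c eps t y) /\ r = INR (length C)).

Definition diam {X : Type} (M : X -> X -> R -> R) (s : R) : R :=
  Inf01 (fun r => exists x y, r = M x y s).

Definition H_M {Z : Type} (M : Z -> Z -> R -> R) (A B : Z -> Prop) (t : R) : R :=
  Rmin (Inf01 (fun r => exists a, A a /\ r = Sup01 (fun q => exists b, B b /\ q = M a b t)))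
       (Inf01 (fun r => exists b, B b /\ r = Sup01 (fun q => exists a, A a /\ q = M a b t))).

Definition admissible {X Y : Type} (MX : X -> X -> R -> R) (MY : Y -> Y -> R -> R)
  (M : (X + Y) -> (X + Y) -> R -> R) : Prop :=
  is_fuzzy_metric M /\ non_archimedean M /\
  (forall a b t, 0 <= t -> M (inl a) (inl b) t = MX a b t) /\
  (forall a b t, 0 <= t -> M (inr a) (inr b) t = MY a b t).

Definition is_inl {X Y : Type} (z : X + Y) : Prop :=
  match z with inl _ => True | inr _ => False end.
Definition is_inr {X Y : Type} (z : X + Y) : Prop :=
  match z with inl _ => False | inr _ => True end.

Definition M_GH {X Y : Type} (MX : X -> X -> R -> R) (MY : Y -> Y -> R -> R) (t : R) : R :=
  Sup01 (fun r => exists M : (X + Y) -> (X + Y) -> R -> R,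
           admissible MX MY M /\ r = H_M M is_inl is_inr t).

Definition GH_Cauchy (X : nat -> Type) (M : forall n, X n -> X n -> R -> R) : Prop :=
  forall t eps, 0 < t -> 0 < eps < 1 ->
    exists n0, forall n m, (n0 <= n)%nat -> (n0 <= m)%nat ->
      M_GH (M n) (M m) t > 1 - eps.

(** The example: X_n = {x_1^n, x_2^n} modelled by bool (x_1 = false, x_2 = true). *)
Definition x1 : bool := false.
Definition x2 : bool := true.
Definition d_n (n : nat) (x y : bool) : R := if Bool.eqb x y then 0 else INR n.
Definition alpha (n : nat) : R := if Nat.even n then 1/2 else 1/3.
Definition M_n (n : nat) (x y : bool) (t : R) : R :=
  if Rle_dec t 0 then 0 else if Rle_dec t (d_n n x y) then alpha n else 1.

(* The first three claims are direct computations with the two values [alpha n] and [1]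
   that [M_n n] takes on distinct points. For (4), fix an admissible non-Archimedean [M]
   on [X_a + X_b] with [a < b]. If both points of [X_a] had a partner in [X_b] at
   [M]-level [> 3/4] for [t = 1], then either they share a partner [y], and
   [M(x1,y,1) M(y,x2,1) <= M(x1,x2,1) = alpha a <= 1/2], or the partners [y1 <> y2]
   differ, and since [M(x1,x2,b) = 1] we get
   [M(y1,x1,1) M(x2,y2,1) <= M(y1,x1,1) M(x1,y2,b) <= M(y1,y2,b) = alpha b <= 1/2];
   both contradict [(3/4)^2 > 1/2]. Hence [M_GH (M_n a) (M_n b) 1 <= 3/4] whenever
   [a < b], and no subsequence is Cauchy. *)
From Stdlib Require Import Reals List.
From Coquelicot Require Import Coquelicot.
From Stdlib Require Import Lra Psatz Classical.
Open Scope R_scope.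

Lemma Sup01_le (E : R -> Prop) c :
  0 <= c -> (forall x, E x -> x <= c) -> Sup01 E <= c.
Proof.
  intros Hc H; unfold Sup01.
  destruct (Lub_Rbar_correct E) as [_ Hlub].
  specialize (Hlub (Finite c) H).
  destruct (Lub_Rbar E); simpl in *; lra.
Qed.

Lemma Sup01_ge0 (E : R -> Prop) x : E x -> 0 <= x -> 0 <= Sup01 E.
Proof.
  intros Ex Hx; unfold Sup01.
  destruct (Lub_Rbar_correct E) as [Hub _].
  specialize (Hub x Ex).
  destruct (Lub_Rbar E); simpl in *; lra.
Qed.

Lemma Inf01_le (E : R -> Prop) r : E r -> 0 <= r -> Inf01 E <= r.
Proof.
  intros Er Hr; unfold Inf01.
  destruct (Glb_Rbar_correct E) as [Hlb _].
  specialize (Hlb r Er).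
  destruct (Glb_Rbar E); simpl in *; easy.
Qed.

Lemma Inf01_ge (E : R -> Prop) c :
  c <= 1 -> (forall x, E x -> c <= x) -> c <= Inf01 E.
Proof.
  intros Hc H; unfold Inf01.
  destruct (Glb_Rbar_correct E) as [_ Hglb].
  specialize (Hglb (Finite c) H).
  destruct (Glb_Rbar E); simpl in *; lra.
Qed.

Lemma fuzzy_compact_of_listing {X : Type} (M : X -> X -> R -> R) (l : list X) :
  (forall x, In x l) -> fuzzy_compact M.
Proof.
  intros Hl I U _ Hcov.
  assert (Hsub : forall l', exists li : list I,
             forall x, In x l' -> exists i, In i li /\ U i x).
  { induction l' as [|x l' [li Hli]].
    - exists nil; intros x [].
    - destruct (Hcov x) as [i Hi]; exists (i :: li).
      intros y [<- | Hy].
      + exists i; split; [left|]; easy.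
      + destruct (Hli y Hy) as [j [Hj HUj]]; exists j; split; [right|]; easy. }
  destruct (Hsub l) as [li Hli]; exists li; intros x; exact (Hli x (Hl x)).
Qed.

Lemma Cov_le_length {X : Type} (M : X -> X -> R -> R) eps t (l : list X) :
  0 < eps -> (forall x, M x x t = 1) -> NoDup l -> (forall x, In x l) ->
  Rbar_le (Cov M eps t) (INR (length l)).
Proof.
  intros Heps Hrefl Hnd Hl; unfold Cov.
  apply (proj1 (Glb_Rbar_correct _)).
  exists l; repeat split; try easy.
  intros y; exists y; split; [easy|]; unfold fball; rewrite Hrefl; lra.
Qed.

Lemma diam_ge {X : Type} (M : X -> X -> R -> R) s c :
  c <= 1 -> (forall x y, c <= M x y s) -> c <= diam M s.
Proof. intros Hc H; apply Inf01_ge; [easy|]; intros r [x [y ->]]; apply H. Qed.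

Lemma H_M_le_of_far_point {Z : Type} (M : Z -> Z -> R -> R) (A B : Z -> Prop) t a b c :
  A a -> B b -> (forall b', B b' -> 0 <= M a b' t <= c) -> H_M M A B t <= c.
Proof.
  intros Aa Bb Hfar; unfold H_M.
  assert (Hc : 0 <= c) by (pose proof (Hfar b Bb); lra).
  eapply Rle_trans; [apply Rmin_l|].
  eapply Rle_trans; [apply Inf01_le; [exists a; split; [exact Aa | reflexivity] |]|].
  - apply (Sup01_ge0 _ (M a b t)); [exists b; easy | apply Hfar, Bb].
  - apply Sup01_le; [easy|]; intros q [b' [Bb' ->]]; apply Hfar, Bb'.
Qed.

Lemma alpha_bounds n : 1/3 <= alpha n <= 1/2.
Proof. unfold alpha; destruct (Nat.even n); lra. Qed.

Lemma alpha_double m : alpha (2 * m) = 1/2.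
Proof. unfold alpha; rewrite Nat.even_mul; reflexivity. Qed.

Lemma M_n_range n x y t : 0 <= t -> 0 <= M_n n x y t <= 1.
Proof.
  intros Ht; pose proof (alpha_bounds n); unfold M_n.
  repeat destruct Rle_dec; lra.
Qed.

Lemma M_n_ge_third n x y t : 0 < t -> 1/3 <= M_n n x y t.
Proof.
  intros Ht; pose proof (alpha_bounds n); unfold M_n.
  repeat destruct Rle_dec; lra.
Qed.

Lemma M_n_refl n x t : 0 < t -> M_n n x x t = 1.
Proof.
  intros Ht; unfold M_n, d_n; rewrite Bool.eqb_reflx.
  repeat destruct Rle_dec; lra.
Qed.

Lemma M_n_neq_le n x y t : x <> y -> 0 < t -> t <= INR n -> M_n n x y t = alpha n.
Proof.
  intros Hxy Ht Htn; unfold M_n, d_n.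
  destruct x, y; try congruence; simpl; repeat destruct Rle_dec; lra.
Qed.

Lemma M_n_gt n x y t : INR n < t -> M_n n x y t = 1.
Proof.
  intros Ht; pose proof (pos_INR n); unfold M_n, d_n.
  destruct x, y; simpl; repeat destruct Rle_dec; lra.
Qed.

Lemma M_n_left_constant n x y t : 0 < t ->
  exists delta, 0 < delta /\ forall u, t - delta < u -> u <= t -> M_n n x y u = M_n n x y t.
Proof.
  intros Ht; pose proof (pos_INR n) as Hn.
  assert (Hd : 0 <= d_n n x y) by (unfold d_n; destruct Bool.eqb; lra).
  destruct (Rle_dec t (d_n n x y)).
  - exists t; split; [easy|]; intros u Hu1 Hu2.
    unfold M_n; repeat destruct Rle_dec; lra.
  - exists (t - d_n n x y); split; [lra|]; intros u Hu1 Hu2.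
    unfold M_n; repeat destruct Rle_dec; lra.
Qed.

Lemma M_n_non_archimedean n : non_archimedean (M_n n).
Proof.
  intros x y z t s Ht Hs; pose proof (alpha_bounds n).
  unfold Rmax, M_n, d_n; destruct Rle_dec;
    destruct x, y, z; simpl; repeat destruct Rle_dec; nra.
Qed.

Lemma M_n_fuzzy_metric n : (1 <= n)%nat -> is_fuzzy_metric (M_n n).
Proof.
  intros Hn; pose proof (alpha_bounds n).
  assert (Hn1 : 1 <= INR n) by (apply le_INR in Hn; simpl in Hn; lra).
  split; [| split; [| split; [| split; [| split]]]].
  - intros x y t; apply M_n_range.
  - intros x y; unfold M_n; destruct Rle_dec; lra.
  - intros x y; split.
    + intros Hone; destruct x, y; try reflexivity;
        specialize (Hone 1 Rlt_0_1); rewrite M_n_neq_le in Hone; easy || lra.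
    + intros -> t Ht; apply M_n_refl, Ht.
  - intros x y t _; unfold M_n, d_n; destruct x, y; reflexivity.
  - intros x y z t s Ht Hs; unfold M_n, d_n;
      destruct x, y, z; simpl; repeat destruct Rle_dec; nra.
  - intros x y t Ht eps Heps.
    destruct (M_n_left_constant n x y t Ht) as [delta [Hdelta Hconst]].
    exists delta; split; [easy|]; intros u _ Hu1 Hu2.
    rewrite Hconst, Rminus_diag_eq, Rabs_R0; easy.
Qed.

Section AdmissibleGluing.

Variables a b : nat.
Hypothesis Ha : (1 <= a)%nat.
Hypothesis Hab : (a < b)%nat.
Variable M : (bool + bool) -> (bool + bool) -> R -> R.
Hypothesis HM : admissible (M_n a) (M_n b) M.

Let Ha1 : 1 <= INR a.
Proof. apply le_INR in Ha; simpl in Ha; lra. Qed.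

Let Hab_R : INR a < INR b.
Proof. apply lt_INR, Hab. Qed.

Let M_range z w t : 0 <= t -> 0 <= M z w t <= 1.
Proof. apply (proj1 (proj1 HM)). Qed.

Let M_sym z w t : 0 <= t -> M z w t = M w z t.
Proof. apply (proj1 (proj2 (proj2 (proj2 (proj1 HM))))). Qed.

Let M_NA : non_archimedean M.
Proof. apply (proj1 (proj2 HM)). Qed.

Let M_inl x y t : 0 <= t -> M (inl x) (inl y) t = M_n a x y t.
Proof. apply (proj1 (proj2 (proj2 HM))). Qed.

Let M_inr x y t : 0 <= t -> M (inr x) (inr y) t = M_n b x y t.
Proof. apply (proj2 (proj2 (proj2 HM))). Qed.

Lemma no_common_close_partner y :
  ~ (M (inl false) (inr y) 1 > 3/4 /\ M (inl true) (inr y) 1 > 3/4).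
Proof.
  intros [H1 H2]; pose proof (alpha_bounds a).
  pose proof (M_NA (inl false) (inr y) (inl true) 1 1 Rlt_0_1 Rlt_0_1) as K.
  rewrite Rmax_left, M_inl, M_n_neq_le, (M_sym (inr y)) in K by (easy || lra).
  nra.
Qed.

Lemma no_distinct_close_partners y1 y2 : y1 <> y2 ->
  ~ (M (inl false) (inr y1) 1 > 3/4 /\ M (inl true) (inr y2) 1 > 3/4).
Proof.
  intros Hne [H1 H2]; pose proof (alpha_bounds b).
  pose proof (M_NA (inr y1) (inl false) (inr y2) 1 (INR b) Rlt_0_1 ltac:(lra)) as K1.
  rewrite Rmax_right, M_inr, M_n_neq_le, (M_sym (inr y1)) in K1 by (easy || lra).
  pose proof (M_NA (inl false) (inl true) (inr y2) (INR b) 1 ltac:(lra) Rlt_0_1) as K2.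
  rewrite Rmax_left, M_inl, M_n_gt in K2 by lra.
  pose proof (M_range (inl false) (inr y2) (INR b) ltac:(lra)).
  nra.
Qed.

Lemma H_M_M_n_le : H_M M is_inl is_inr 1 <= 3/4.
Proof.
  assert (Hfar : forall x, ~ (exists y, M (inl x) (inr y) 1 > 3/4) ->
                   H_M M is_inl is_inr 1 <= 3/4).
  { intros x Hno; apply (H_M_le_of_far_point _ _ _ _ (inl x) (inr false)); [easy..|].
    intros [z | y] Hy; [contradiction|].
    split; [apply M_range; lra|].
    apply Rnot_gt_le; intros Hgt; apply Hno; exists y; exact Hgt. }
  destruct (classic (exists y, M (inl false) (inr y) 1 > 3/4)) as [[y1 Hy1] | Hno1];
    [| exact (Hfar false Hno1)].
  destruct (classic (exists y, M (inl true) (inr y) 1 > 3/4)) as [[y2 Hy2] | Hno2];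
    [| exact (Hfar true Hno2)].
  exfalso; destruct (Bool.bool_dec y1 y2) as [<- | Hne].
  - exact (no_common_close_partner y1 (conj Hy1 Hy2)).
  - exact (no_distinct_close_partners y1 y2 Hne (conj Hy1 Hy2)).
Qed.

End AdmissibleGluing.

Lemma M_GH_M_n_le a b : (1 <= a)%nat -> (a < b)%nat -> M_GH (M_n a) (M_n b) 1 <= 3/4.
Proof.
  intros Ha Hab; apply Sup01_le; [lra|].
  intros r [M [HM ->]]; exact (H_M_M_n_le a b Ha Hab M HM).
Qed.

Lemma M_n_not_GH_Cauchy (phi : nat -> nat) :
  (forall k, (1 <= phi k)%nat) -> (forall k, (phi k < phi (S k))%nat) ->
  ~ GH_Cauchy (fun _ => bool) (fun k => M_n (phi k)).
Proof.
  intros Hpos Hincr HC.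
  destruct (HC 1 (1/4) Rlt_0_1 ltac:(lra)) as [n0 Hn0].
  specialize (Hn0 n0 (S n0) (le_n _) (le_S _ _ (le_n _))).
  pose proof (M_GH_M_n_le (phi n0) (phi (S n0)) (Hpos n0) (Hincr n0)).
  simpl in Hn0; lra.
Qed.

Theorem mainTheorem9 :
  (forall n : nat, (1 <= n)%nat ->
     is_fuzzy_metric (M_n n) /\ non_archimedean (M_n n) /\ fuzzy_compact (M_n n)) /\
  (* (1) *)
  (let C := fun s : R => 1/3 in
   forall s n, 0 < s -> (1 <= n)%nat -> 0 < C s /\ C s <= diam (M_n n) s) /\
  (* (2) *)
  (forall t eps n, 0 < t -> 0 < eps < 1 -> (1 <= n)%nat ->
     Rbar_le (Cov (M_n n) eps t) 2) /\
  (* (3) *)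
  (let t := 1/2 in
   forall (n m : nat) (s : R), (1 <= m)%nat -> n = (2 * m)%nat ->
     INR m < s < INR n ->
     M_n n x1 x2 s < M_n m x1 x2 s /\
     M_n n x1 x2 s / M_n m x1 x2 s < M_n n x1 x2 t / M_n m x1 x2 t) /\
  (* (4) *)
  (forall phi : nat -> nat, (1 <= phi 0%nat)%nat ->
     (forall k, (phi k < phi (S k))%nat) ->
     ~ GH_Cauchy (fun _ => bool) (fun k => M_n (phi k))).
Proof.
  assert (Hbool : forall x : bool, In x (false :: true :: nil))
    by (intros []; simpl; auto).
  split; [| split; [| split; [| split]]].
  - intros n Hn; split; [| split].
    + apply M_n_fuzzy_metric, Hn.
    + apply M_n_non_archimedean.
    + apply (fuzzy_compact_of_listing _ _ Hbool).
  - intros C s n Hs _; split; [unfold C; lra|].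
    apply diam_ge; [unfold C; lra|]; intros x y; apply M_n_ge_third, Hs.
  - intros t eps n Ht Heps _.
    replace 2 with (INR (length (false :: true :: nil))) by (simpl; lra).
    apply Cov_le_length; [lra | intros x; apply M_n_refl, Ht | | exact Hbool].
    repeat constructor; simpl; intuition congruence.
  - intros t n m s Hm -> Hs; unfold t; rewrite mult_INR in Hs; simpl in Hs.
    pose proof (alpha_bounds m).
    assert (Hm1 : 1 <= INR m) by (apply le_INR in Hm; simpl in Hm; lra).
    assert (Hx : x1 <> x2) by easy.
    rewrite (M_n_neq_le _ _ _ s), (M_n_gt m _ _ s), (M_n_neq_le _ _ _ (1/2)),
      (M_n_neq_le m _ _ (1/2)), alpha_double by (rewrite ?mult_INR; simpl; easy || lra).
    split; [lra|].
    apply Rmult_lt_compat_l; [lra|]; rewrite Rinv_1.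
    rewrite <- Rinv_1 at 1; apply Rinv_lt_contravar; lra.
  - intros phi H0 Hincr.
    apply M_n_not_GH_Cauchy; [| exact Hincr].
    induction k; [exact H0 | specialize (Hincr k); lia].
Qed.
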